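(* Let $P,K:\mathbb{N}_0\to\mathbb{N}_0$ be a scaling with $\lim_{n\to\infty}K_n^2/P_n=0$. Then $\beta(\theta_n)\sim\tau(\theta_n)$ as $n\to\infty$, where $\tau(\theta_n)=\frac{K_n^3}{P_n^2}+\left(\frac{K_n^2}{P_n}\right)^3$.
   Context: For positive integers $K\le P$, $\theta=(K,P)$: $q(\theta)=\binom{P-K}{K}/\binom{P}{K}$ if $2K\le P$ and $q(\theta)=0$ if $P<2K$; $r(\theta)=\binom{P-2K}{K}/\binom{P}{K}$ if $3K\le P$ and $r(\theta)=0$ if $P<3K$; $\beta(\theta)=(1-q(\theta))^3+q(\theta)^3-q(\theta)r(\theta)$ (this is the probability that three given nodes form a triangle in the random key graph in which each node receives a uniformly random $K$-subset of $\{1,\dots,P\}$ independently, and two nodes are adjacent iff their subsets intersect); $\tau(\theta)=K^3/P^2+(K^2/P)^3$. A scaling is a pair of functions $P,K:\mathbb{N}_0\to\mathbb{N}_0$ with $1\le K_n\le P_n$ for all $n$, and $\theta_n=(K_n,P_n)$. Asymptotic equivalence $a_n\sim b_n$ means $a_n/b_n\to1$. *)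

From Stdlib Require Import Reals Arith.
Open Scope R_scope.

(* Real-valued binomial coefficient: Stdlib's Binomial.C n k = n!/(k!(n-k)!),
   used only with k <= n below. *)

Definition q (K P : nat) : R :=
  if (2 * K <=? P)%nat then C (P - K) K / C P K else 0.

Definition r (K P : nat) : R :=
  if (3 * K <=? P)%nat then C (P - 2 * K) K / C P K else 0.

Definition beta (K P : nat) : R :=
  (1 - q K P) ^ 3 + q K P ^ 3 - q K P * r K P.

Definition tau (K P : nat) : R :=
  INR K ^ 3 / INR P ^ 2 + (INR K ^ 2 / INR P) ^ 3.

From Stdlib Require Import Reals Arith Lra Lia Psatz.
Open Scope R_scope.

(** With [x = K^2/P], the non-overlap probability [q] is the product of the [K]
    factors [1 - K/(P-i)] and [r] the product of the factors [1 - 2K/(P-i)].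
    Bernoulli-type product bounds give [1 - q = x (1 + O(x))].  Since
    [(1 - K/m)^2 = (1 - 2K/m) + K^2/m^2], the difference [q^2 - r] picks up one
    term of size about [K^2/P^2] per factor, so [q^2 - r = (K^3/P^2)(1 + O(x))].
    Hence in [beta = (1-q)^3 + q (q^2 - r)] the two summands are within a factor
    [1 + O(x)] of [x^3] and [K^3/P^2], and [|beta/tau - 1| <= 5x] once [x <= 1/10]. *)

Fixpoint prod_ratio (P s k : nat) : R :=
  match k with
  | O => 1
  | S i => prod_ratio P s i * (INR (P - s - i) / INR (P - i))
  end.

Lemma prod_ratio_fact P s k : (s + k <= P)%nat ->
  prod_ratio P s k = INR (fact (P - s)) * INR (fact (P - k)) /
                     (INR (fact (P - s - k)) * INR (fact P)).
Proof.
  induction k as [|k IH]; intros H.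
  - simpl. rewrite !Nat.sub_0_r.
    pose proof (INR_fact_neq_0 (P - s)). pose proof (INR_fact_neq_0 P). field; auto.
  - simpl prod_ratio. rewrite IH by lia.
    replace (P - s - k)%nat with (S (P - s - S k)) by lia.
    replace (P - k)%nat with (S (P - S k)) by lia.
    rewrite !fact_simpl, !mult_INR.
    pose proof (INR_fact_neq_0 (P - s)). pose proof (INR_fact_neq_0 P).
    pose proof (INR_fact_neq_0 (P - s - S k)). pose proof (INR_fact_neq_0 (P - S k)).
    assert (INR (S (P - s - S k)) <> 0) by (apply not_0_INR; lia).
    assert (INR (S (P - S k)) <> 0) by (apply not_0_INR; lia).
    field; repeat split; auto.
Qed.

Lemma binomial_ratio_eq_prod_ratio P s K : (s + K <= P)%nat ->
  C (P - s) K / C P K = prod_ratio P s K.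
Proof.
  intros H. rewrite prod_ratio_fact by exact H. unfold C.
  pose proof (INR_fact_neq_0 (P - s)). pose proof (INR_fact_neq_0 (P - K)).
  pose proof (INR_fact_neq_0 (P - s - K)).
  pose proof (INR_fact_neq_0 K). pose proof (INR_fact_neq_0 P).
  field; repeat split; auto.
Qed.

Lemma q_eq_prod_ratio K P : (2 * K <= P)%nat -> q K P = prod_ratio P K K.
Proof.
  intros H. unfold q. rewrite (proj2 (Nat.leb_le _ _) H).
  apply binomial_ratio_eq_prod_ratio. lia.
Qed.

Lemma r_eq_prod_ratio K P : (3 * K <= P)%nat -> r K P = prod_ratio P (2 * K) K.
Proof.
  intros H. unfold r. rewrite (proj2 (Nat.leb_le _ _) H).
  apply binomial_ratio_eq_prod_ratio. lia.
Qed.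

Lemma ratio_eq P s i : (s + i <= P)%nat -> (i < P)%nat ->
  INR (P - s - i) / INR (P - i) = 1 - INR s / (INR P - INR i).
Proof.
  intros Hs Hi. rewrite !minus_INR by lia.
  assert (INR i < INR P) by (apply lt_INR; lia). field. lra.
Qed.

Lemma ratio_range P s i : (s + i <= P)%nat -> (i < P)%nat ->
  0 <= INR (P - s - i) / INR (P - i) <= 1.
Proof.
  intros Hs Hi.
  assert (Hpos : 0 < INR (P - i)) by (apply lt_0_INR; lia).
  assert (INR (P - s - i) <= INR (P - i)) by (apply le_INR; lia).
  pose proof (pos_INR (P - s - i)).
  split.
  - apply Rmult_le_pos; [lra | left; apply Rinv_0_lt_compat; lra].
  - apply Rmult_le_reg_r with (INR (P - i)); [lra|].
    unfold Rdiv. rewrite Rmult_assoc, Rinv_l by lra. lra.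
Qed.

Lemma prod_ratio_range P s k : (s + k <= P)%nat -> (k < P)%nat ->
  0 <= prod_ratio P s k <= 1.
Proof.
  induction k as [|k IH]; intros Hs Hk; simpl prod_ratio; [lra|].
  destruct IH as [G0 G1]; [lia | lia |].
  destruct (ratio_range P s k) as [T0 T1]; [lia | lia |].
  split; [apply Rmult_le_pos | nra]; lra.
Qed.

Lemma prod_ratio_ge P s k : (s + k <= P)%nat -> (k < P)%nat ->
  1 - INR k * (INR s / (INR P - INR k)) <= prod_ratio P s k.
Proof.
  induction k as [|k IH]; intros Hs Hk; simpl prod_ratio; [simpl; lra|].
  specialize (IH ltac:(lia) ltac:(lia)).
  destruct (prod_ratio_range P s k) as [G0 G1]; [lia | lia |].
  rewrite ratio_eq by lia. rewrite S_INR in *.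
  assert (INR (S k) < INR P) by (apply lt_INR; lia). rewrite S_INR in *.
  pose proof (pos_INR k). pose proof (pos_INR s).
  set (d := INR s / (INR P - (INR k + 1))).
  assert (Hd : INR s / (INR P - INR k) <= d).
  { unfold d, Rdiv. apply Rmult_le_compat_l; [lra|]. apply Rinv_le_contravar; lra. }
  assert (0 <= INR s / (INR P - INR k)).
  { apply Rmult_le_pos; [lra | left; apply Rinv_0_lt_compat; lra]. }
  nra.
Qed.

Lemma prod_ratio_le_pow P s k : (s + k <= P)%nat -> (k < P)%nat ->
  prod_ratio P s k <= (1 - INR s / INR P) ^ k.
Proof.
  induction k as [|k IH]; intros Hs Hk; simpl prod_ratio; simpl pow; [lra|].
  specialize (IH ltac:(lia) ltac:(lia)).
  destruct (prod_ratio_range P s k) as [G0 G1]; [lia | lia |].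
  destruct (ratio_range P s k) as [T0 T1]; [lia | lia |].
  rewrite ratio_eq in * by lia.
  assert (INR k < INR P) by (apply lt_INR; lia).
  pose proof (pos_INR k).
  assert (INR s / INR P <= INR s / (INR P - INR k)).
  { unfold Rdiv. apply Rmult_le_compat_l; [apply pos_INR|]. apply Rinv_le_contravar; lra. }
  rewrite Rmult_comm. apply Rmult_le_compat; lra.
Qed.

Lemma pow_one_sub_mul_one_add_le n w : 0 <= w <= 1 -> (1 - w) ^ n * (1 + INR n * w) <= 1.
Proof.
  intros Hw. destruct (Req_dec w 0) as [-> | Hw0].
  - rewrite Rminus_0_r, pow1. lra.
  - assert (Hpoly : 1 + INR n * w <= (1 + w) ^ n) by (apply poly; lra).
    assert (0 <= (1 - w) ^ n) by (apply pow_le; lra).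
    apply Rle_trans with ((1 - w) ^ n * (1 + w) ^ n); [nra|].
    rewrite <- Rpow_mult_distr. apply Rle_trans with (1 ^ n); [apply pow_incr; nra | rewrite pow1; lra].
Qed.

Lemma sq_sub_step (G B a b c lo hi n : R) :
  a ^ 2 = b + c -> 0 <= b -> 0 <= a <= 1 -> 0 <= B <= 1 -> 0 <= n ->
  0 <= lo <= c -> c <= hi ->
  B * n * lo <= G ^ 2 - B <= n * hi ->
  B * b * (n + 1) * lo <= (G * a) ^ 2 - B * b <= (n + 1) * hi.
Proof.
  intros Hab Hb Ha HB Hn Hlo Hhi [HDlo HDhi].
  assert (Hsplit : (G * a) ^ 2 - B * b = (G ^ 2 - B) * a ^ 2 + B * c).
  { replace ((G * a) ^ 2) with (G ^ 2 * a ^ 2) by ring. rewrite Hab. ring. }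
  assert (Ha2 : b <= a ^ 2 <= 1) by nra.
  assert (HBlo : 0 <= B * n * lo) by (apply Rmult_le_pos; [apply Rmult_le_pos|]; lra).
  rewrite Hsplit. split.
  - assert (B * n * lo * b <= (G ^ 2 - B) * a ^ 2).
    { apply Rle_trans with (B * n * lo * a ^ 2); apply Rmult_le_compat; nra. }
    assert (B * b * lo <= B * c) by (apply Rmult_le_compat; nra).
    nra.
  - assert ((G ^ 2 - B) * a ^ 2 <= G ^ 2 - B) by nra.
    assert (B * c <= hi) by nra.
    nra.
Qed.

Lemma prod_ratio_sq_sub_bounds P K n : (3 * K <= P)%nat -> (n <= K)%nat ->
  prod_ratio P (2 * K) n * INR n * (INR K ^ 2 / INR P ^ 2)
    <= prod_ratio P K n ^ 2 - prod_ratio P (2 * K) n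
    <= INR n * (INR K ^ 2 / (INR P - INR K) ^ 2).
Proof.
  intros HP. induction n as [|n IH]; intros Hn; simpl prod_ratio; [simpl; lra|].
  assert (HKP : 3 * INR K <= INR P).
  { replace 3 with (INR 3) by (simpl; lra). rewrite <- mult_INR. apply le_INR; lia. }
  assert (Hnk : INR n < INR K) by (apply lt_INR; lia).
  pose proof (pos_INR n).
  rewrite S_INR.
  apply sq_sub_step with (c := INR K ^ 2 / (INR P - INR n) ^ 2).
  - rewrite !ratio_eq, !plus_INR by lia. simpl (INR 0). field. lra.
  - apply ratio_range; lia.
  - apply ratio_range; lia.
  - apply prod_ratio_range; lia.
  - exact (pos_INR n).
  - split.
    + apply Rmult_le_pos; [nra | left; apply Rinv_0_lt_compat; nra].
    + unfold Rdiv. apply Rmult_le_compat_l; [nra|]. apply Rinv_le_contravar; nra.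
  - unfold Rdiv. apply Rmult_le_compat_l; [nra|]. apply Rinv_le_contravar; nra.
  - apply IH. lia.
Qed.

Lemma one_sub_cube_bounds x e q :
  0 < x <= 1/10 -> 1 <= e <= 1 + 10/9 * x -> q * (1 + x) <= 1 -> 1 - x * e <= q ->
  x ^ 3 * (1 - 3 * x) <= (1 - q) ^ 3 <= x ^ 3 * (1 + 5 * x).
Proof.
  intros Hx He Hqu Hql.
  assert (Hlo : x - x * x <= 1 - q) by nra.
  assert (Hhi : 1 - q <= x * e) by lra.
  assert (0 <= x - x * x) by nra.
  split.
  - apply Rle_trans with ((x - x * x) ^ 3); [|apply pow_incr; lra].
    replace ((x - x * x) ^ 3) with (x ^ 3 * (1 - x) ^ 3) by ring.
    apply Rmult_le_compat_l; nra.
  - apply Rle_trans with ((x * e) ^ 3); [apply pow_incr; lra|].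
    rewrite Rpow_mult_distr. apply Rmult_le_compat_l; [nra|].
    apply Rle_trans with ((1 + 10/9 * x) ^ 3); [apply pow_incr; lra | nra].
Qed.

Lemma mul_sq_sub_bounds x e y q r D :
  0 < x <= 1/10 -> 1 <= e <= 1 + 10/9 * x -> 0 < y -> 0 <= q <= 1 ->
  1 - x * e <= q -> 1 - 2 * x * e <= r -> r * y <= D <= y * e ^ 2 ->
  (1 - 4 * x) * y <= q * D <= (1 + 5 * x) * y.
Proof.
  intros Hx He Hy Hq Hql Hrl [HDl HDu].
  assert (Hxe : x * e <= 1/9) by nra.
  assert (Hqr : 1 - 4 * x <= q * r).
  { apply Rle_trans with ((1 - x * e) * (1 - 2 * x * e)); [nra|].
    apply Rmult_le_compat; nra. }
  assert (He2 : e ^ 2 <= 1 + 5 * x).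
  { apply Rle_trans with ((1 + 10/9 * x) ^ 2); [apply pow_incr; lra | nra]. }
  split.
  - apply Rle_trans with (q * r * y); [apply Rmult_le_compat_r; lra|].
    rewrite Rmult_assoc. apply Rmult_le_compat_l; lra.
  - assert (0 <= D) by (apply Rle_trans with (r * y); [apply Rmult_le_pos|]; lra).
    apply Rle_trans with D; [nra|].
    apply Rle_trans with (y * e ^ 2); [lra|]. rewrite Rmult_comm.
    apply Rmult_le_compat_r; lra.
Qed.

Lemma Rabs_div_sub_one_le S T d : 0 < T -> (1 - d) * T <= S <= (1 + d) * T ->
  Rabs (S / T - 1) <= d.
Proof.
  intros HT HS.
  replace (S / T - 1) with ((S - T) / T) by (field; lra).
  unfold Rdiv. rewrite Rabs_mult, Rabs_inv, (Rabs_pos_eq T) by lra.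
  apply Rmult_le_reg_r with T; [lra|].
  rewrite Rmult_assoc, Rinv_l, Rmult_1_r by lra. apply Rabs_le. lra.
Qed.

Section SparseScaling.

Variables K P : nat.
Hypothesis K_pos : (1 <= K)%nat.
Hypothesis K_le_P : (K <= P)%nat.
Hypothesis sparse : INR K ^ 2 / INR P <= 1/10.

Let x := INR K ^ 2 / INR P.
Let y := INR K ^ 3 / INR P ^ 2.
Let e := INR P / (INR P - INR K).

Let K_ge_1 : 1 <= INR K.
Proof. apply (le_INR 1). exact K_pos. Qed.

Let ten_K_sq_le_P : 10 * INR K ^ 2 <= INR P.
Proof.
  assert (0 < INR P) by (apply lt_0_INR; lia).
  apply Rmult_le_reg_r with (/ INR P); [apply Rinv_0_lt_compat; lra|].
  rewrite Rinv_r by lra. fold x. unfold x, Rdiv in *. lra.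
Qed.

Lemma three_K_le_P : (3 * K <= P)%nat.
Proof. apply INR_le. rewrite mult_INR. simpl (INR 3). nra. Qed.

Lemma x_pos : 0 < x.
Proof. unfold x. apply Rdiv_lt_0_compat; nra. Qed.

Lemma e_bounds : 1 <= e <= 1 + 10/9 * x.
Proof.
  assert (x * INR P = INR K ^ 2) by (unfold x; field; nra).
  unfold e. split.
  - apply Rmult_le_reg_r with (INR P - INR K); [nra|].
    unfold Rdiv. rewrite Rmult_assoc, Rinv_l by nra. nra.
  - apply Rmult_le_reg_r with (INR P - INR K); [nra|].
    unfold Rdiv. rewrite Rmult_assoc, Rinv_l by nra.
    assert (x * INR K <= INR K / 10) by (unfold x in *; nra).
    nra.
Qed.

Let P_sub_K_pos : 0 < INR P - INR K.
Proof. nra. Qed.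

Lemma q_range : 0 <= q K P <= 1.
Proof.
  pose proof three_K_le_P.
  rewrite q_eq_prod_ratio by lia. apply prod_ratio_range; lia.
Qed.

Lemma q_lower : 1 - x * e <= q K P.
Proof.
  pose proof three_K_le_P.
  rewrite q_eq_prod_ratio by lia.
  replace (x * e) with (INR K * (INR K / (INR P - INR K))) by (unfold x, e; field; nra).
  apply prod_ratio_ge; lia.
Qed.

Lemma q_upper : q K P * (1 + x) <= 1.
Proof.
  pose proof three_K_le_P.
  assert (0 <= q K P) by apply q_range.
  assert (Hw : 0 <= INR K / INR P <= 1).
  { split; [apply Rmult_le_pos; [lra | left; apply Rinv_0_lt_compat; nra]|].
    apply Rmult_le_reg_r with (INR P); [nra|].
    unfold Rdiv. rewrite Rmult_assoc, Rinv_l by nra. nra. }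
  replace x with (INR K * (INR K / INR P)) by (unfold x; field; nra).
  apply Rle_trans with ((1 - INR K / INR P) ^ K * (1 + INR K * (INR K / INR P))).
  - apply Rmult_le_compat_r; [nra|].
    rewrite q_eq_prod_ratio by lia. apply prod_ratio_le_pow; lia.
  - apply pow_one_sub_mul_one_add_le. exact Hw.
Qed.

Lemma r_lower : 1 - 2 * x * e <= r K P.
Proof.
  pose proof three_K_le_P.
  rewrite r_eq_prod_ratio by lia.
  replace (2 * x * e) with (INR K * (INR (2 * K) / (INR P - INR K)))
    by (rewrite mult_INR; unfold x, e; simpl (INR 2); field; nra).
  apply prod_ratio_ge; lia.
Qed.

Lemma q_sq_sub_r_bounds : r K P * y <= q K P ^ 2 - r K P <= y * e ^ 2.
Proof.
  pose proof three_K_le_P.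
  rewrite q_eq_prod_ratio, r_eq_prod_ratio by lia.
  replace (prod_ratio P (2 * K) K * y)
    with (prod_ratio P (2 * K) K * INR K * (INR K ^ 2 / INR P ^ 2)) by (unfold y; field; nra).
  replace (y * e ^ 2) with (INR K * (INR K ^ 2 / (INR P - INR K) ^ 2)) by (unfold y, e; field; nra).
  apply prod_ratio_sq_sub_bounds; lia.
Qed.

Lemma beta_rel_error : Rabs (beta K P / tau K P - 1) <= 5 * (INR K ^ 2 / INR P).
Proof.
  fold x.
  assert (Hx : 0 < x <= 1/10) by (split; [apply x_pos | exact sparse]).
  assert (Hy : 0 < y) by (unfold y; apply Rdiv_lt_0_compat; nra).
  pose proof e_bounds as He.
  pose proof (one_sub_cube_bounds x e (q K P) Hx He q_upper q_lower) as Hcube.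
  pose proof (mul_sq_sub_bounds x e y (q K P) (r K P) (q K P ^ 2 - r K P)
                Hx He Hy q_range q_lower r_lower q_sq_sub_r_bounds) as Hmul.
  assert (Hbeta : beta K P = (1 - q K P) ^ 3 + q K P * (q K P ^ 2 - r K P))
    by (unfold beta; ring).
  assert (Htau : tau K P = y + x ^ 3) by reflexivity.
  rewrite Hbeta, Htau.
  apply Rabs_div_sub_one_le; [nra|].
  split; nra.
Qed.

End SparseScaling.

Theorem proposition3 (K P : nat -> nat)
  (hscale : forall n, (1 <= K n)%nat /\ (K n <= P n)%nat)
  (hlim : Un_cv (fun n => INR (K n) ^ 2 / INR (P n)) 0) :
  Un_cv (fun n => beta (K n) (P n) / tau (K n) (P n)) 1.
Proof.
  intros eps Heps.
  destruct (hlim (Rmin (1/10) (eps/10))) as [N HN]; [apply Rmin_pos; lra|].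
  exists N. intros n Hn. specialize (HN n Hn).
  unfold R_dist in *. rewrite Rminus_0_r in HN.
  destruct (hscale n) as [HK HKP].
  pose proof (Rmin_l (1/10) (eps/10)). pose proof (Rmin_r (1/10) (eps/10)).
  apply Rabs_def2 in HN. destruct HN as [HN1 HN2].
  pose proof (beta_rel_error (K n) (P n) HK HKP ltac:(lra)). lra.
Qed.
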